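(* Let $A\in\mathbb{R}^{n\times n}$ be Hurwitz, let $B_u\in\mathbb{R}^{n\times l}$ and $S_\eta\in\mathbb{R}^{n\times n_\eta}$ be given, and let $\bar\gamma>0$ be a given scalar. Let data samples $d_i=\begin{bmatrix}\hat x_i^\top & u_i^\top & \hat\eta_i^\top\end{bmatrix}^\top$, $i=1,\dots,N$, with $\hat x_i\in\mathbb{R}^n$, $u_i\in\mathbb{R}^l$, $\hat\eta_i\in\mathbb{R}^{n_\eta}$, be given and let $D=\sum_{i=1}^N d_id_i^\top$. Consider the convex program in the variables $Q=Q^\top\in\mathbb{R}^{n\times n}$, $\Theta_l\in\mathbb{R}^{n_\eta\times n}$, $B_l\in\mathbb{R}^{n_\eta\times l}$, $W=W^\top\in\mathbb{R}^{n_\eta\times n_\eta}$: $$\min\ \operatorname{tr}(W)\quad\text{s.t.}\quad \begin{bmatrix}AQ+QA^\top & S_\eta\Theta_l+\bar\gamma Q\\ \star & -2\bar\gamma I\end{bmatrix}\prec 0,\qquad \operatorname{tr}(TDT^\top)\le\operatorname{tr}(W),\qquad Q\succ 0,$$ where $T:=\begin{bmatrix}\Theta_l & B_l & -I_{n_\eta}\end{bmatrix}$. Let $(Q^\star,\Theta_l^\star,B_l^\star,W^\star)$ be an optimizer. Set $S_{\eta_l}=S_\eta$, $\Theta_l=\Theta_l^\star$, $B_l=B_l^\star$. Then the model $$\dot x=Ax+B_uu+S_{\eta}(\Theta_l^\star x+B_l^\star u)$$ is asymptotically stable (for $u=0$), i.e. $(A+S_\eta\Theta_l^\star)Q^\star+Q^\star(A+S_\eta\Theta_l^\star)^\top\prec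 0$ and hence $A+S_\eta\Theta_l^\star$ is Hurwitz. Moreover the cost $J=\sum_{i=1}^N e_i^\top e_i$ with $e_i:=\Theta_l^\star\hat x_i+B_l^\star u_i-\hat\eta_i$ satisfies $J\le\operatorname{tr}(W^\star)$.
   Context: Setting: one seeks a linear uncertainty model $\eta_l(x,u)=\Theta_lx+B_lu$ to augment the known linear model $\dot x=Ax+B_uu$ as $\dot x=Ax+B_uu+S_{\eta_l}\eta_l(x,u)$, fitted to data $(\hat x_i,u_i,\hat\eta_i)$ (estimates of state, input, and uncertainty) by the quadratic cost $J=\sum_i e_i^\top e_i=\sum_i d_i^\top T^\top T d_i=\operatorname{tr}(TDT^\top)$ with $T=[\Theta_l\ \ B_l\ \ -I]$, $e_i=Td_i$. The matrix $S_\eta$ indicates in which state equations the uncertainty enters in the true system $\dot x_s=Ax_s+B_uu+S_\eta\eta(x_s,u)+B_\omega\omega$. A matrix is Hurwitz if all its eigenvalues have negative real part; $\star$ denotes blocks determined by symmetry. *)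

From HB Require Import structures.
From mathcomp Require Import all_boot all_order all_algebra.
From mathcomp Require Import complex.
From mathcomp Require Import reals.
Set Implicit Arguments. Unset Strict Implicit. Unset Printing Implicit Defensive.
Import Order.TTheory GRing.Theory Num.Theory.
Local Open Scope ring_scope.

(* Eigenvalues of a real square matrix are the complex roots of its
   characteristic polynomial. A is Hurwitz iff all of them have negative
   real part. *)
Definition hurwitz (R : realType) (n : nat) (A : 'M[R]_n) : Prop :=
  forall z : R[i], root (map_poly (fun r : R => (r%:C)%C) (char_poly A)) z ->
    complex.Re z < 0.

Definition posdef (R : realType) (m : nat) (M : 'M[R]_m) : Prop :=
  M^T = M /\ forall x : 'cV[R]_m, x != 0 -> 0 < (x^T *m M *m x) 0 0.
Definition negdef (R : realType) (m : nat) (M : 'M[R]_m) : Prop :=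
  M^T = M /\ forall x : 'cV[R]_m, x != 0 -> (x^T *m M *m x) 0 0 < 0.

Definition dvec (R : realType) (n l ne : nat) (x : 'cV[R]_n) (u : 'cV[R]_l)
  (e : 'cV[R]_ne) : 'cV[R]_(n + l + ne) := col_mx (col_mx x u) e.

Definition Dmat (R : realType) (n l ne N : nat) (xh : 'I_N -> 'cV[R]_n)
  (u : 'I_N -> 'cV[R]_l) (eh : 'I_N -> 'cV[R]_ne) : 'M[R]_(n + l + ne) :=
  \sum_(i < N) (dvec (xh i) (u i) (eh i) *m (dvec (xh i) (u i) (eh i))^T).

Definition Tmat (R : realType) (n l ne : nat) (Th : 'M[R]_(ne, n))
  (Bl : 'M[R]_(ne, l)) : 'M[R]_(ne, n + l + ne) :=
  row_mx (row_mx Th Bl) (- (1%:M)).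

Definition feasible (R : realType) (n l ne : nat) (A : 'M[R]_n)
  (S : 'M[R]_(n, ne)) (gam : R) (D : 'M[R]_(n + l + ne))
  (Q : 'M[R]_n) (Th : 'M[R]_(ne, n)) (Bl : 'M[R]_(ne, l)) (W : 'M[R]_ne) : Prop :=
  [/\ Q^T = Q, W^T = W,
      negdef (block_mx (A *m Q + Q *m A^T) (S *m Th + gam *: Q)
                       (S *m Th + gam *: Q)^T (- (2 * gam) *: 1%:M)),
      \tr (Tmat Th Bl *m D *m (Tmat Th Bl)^T) <= \tr W
    & posdef Q].

Definition optimizer (R : realType) (n l ne : nat) (A : 'M[R]_n)
  (S : 'M[R]_(n, ne)) (gam : R) (D : 'M[R]_(n + l + ne))
  (Q : 'M[R]_n) (Th : 'M[R]_(ne, n)) (Bl : 'M[R]_(ne, l)) (W : 'M[R]_ne) : Prop :=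
  feasible A S gam D Q Th Bl W /\
  forall Q' Th' Bl' W', feasible A S gam D Q' Th' Bl' W' -> \tr W <= \tr W'.

From HB Require Import structures.
From mathcomp Require Import all_boot all_order all_algebra.
From mathcomp Require Import complex reals ring.
Import Order.TTheory GRing.Theory Num.Theory.

(* A Lyapunov inequality
   M P + P M^T < 0 with P > 0 forces M to be Hurwitz: for a left eigenvector v
   of M with eigenvalue z, the Hermitian form v (M P + P M^T) v^* equals
   2 Re z . v P v^*.  The cost bound is tr(T D T^T) = sum_i |T d_i|^2 with
   T d_i = e_i. *)

Set Implicit Arguments.
Unset Strict Implicit.
Unset Printing Implicit Defensive.
Local Open Scope ring_scope.

Section QuadraticForms.
Variables (R : realType) (n : nat).
Implicit Types (K M P : 'M[R]_n) (y : 'rV[R]_n) (v : 'rV[R[i]]_n) (z : R[i]).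

Lemma posdef_row_gt0 K y : posdef K -> y != 0 -> 0 < (y *m K *m y^T) 0 0.
Proof. by case=> _ Kpos y0; have := Kpos y^T; rewrite trmxK trmx_eq0; apply. Qed.

Lemma posdef_row_ge0 K y : posdef K -> 0 <= (y *m K *m y^T) 0 0.
Proof.
move=> Kpos; have [->|y0] := eqVneq y 0; first by rewrite !mul0mx mxE.
exact/ltW/posdef_row_gt0.
Qed.

Lemma negdef_posdefN K : negdef K -> posdef (- K).
Proof.
case=> KT Kneg; split; first by rewrite linearN /= KT.
by move=> x x0; rewrite mulmxN mulNmx mxE oppr_gt0 Kneg.
Qed.

Definition hform K v := (v *m map_mx (real_complex R) K *m (map_mx conjc v)^T) 0 0.

Lemma Re_hform K v :
  complex.Re (hform K v) =
  (map_mx (@complex.Re R) v *m K *m (map_mx (@complex.Re R) v)^T) 0 0 +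
  (map_mx (@complex.Im R) v *m K *m (map_mx (@complex.Im R) v)^T) 0 0.
Proof.
rewrite /hform !mxE (raddf_sum (@complex.Re R : Rcomplex R -> R)) -big_split /=.
apply: eq_bigr => j _; rewrite !mxE !mulr_suml -big_split.
rewrite (raddf_sum (@complex.Re R : Rcomplex R -> R)); apply: eq_bigr => k _.
by rewrite !mxE; case: (v 0 k) => ak bk; case: (v 0 j) => aj bj /=; ring.
Qed.

Lemma posdef_Re_hform_gt0 K v : posdef K -> v != 0 -> 0 < complex.Re (hform K v).
Proof.
move=> Kpos v0; rewrite Re_hform.
have [a0|a0] := eqVneq (map_mx (@complex.Re R) v) 0; last first.
  by rewrite ltr_pwDl ?posdef_row_ge0 ?posdef_row_gt0.
have b0 : map_mx (@complex.Im R) v != 0.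
  apply: contra_neq v0 => b0; apply/matrixP => i j.
  move/matrixP: a0 => /(_ i j); move/matrixP: b0 => /(_ i j).
  by rewrite !mxE; case: (v i j) => ? ? /= -> ->.
by rewrite ltr_pwDr ?posdef_row_ge0 ?posdef_row_gt0.
Qed.

Lemma eigenvector_conjc M v z :
  v *m map_mx (real_complex R) M = z *: v ->
  map_mx conjc v *m map_mx (real_complex R) M = z^*%C *: map_mx conjc v.
Proof.
have conjcM : map_mx conjc (map_mx (real_complex R) M) = map_mx (real_complex R) M.
  by apply/matrixP => i j; rewrite !mxE conjc_real.
move/(congr1 (map_mx conjc)); rewrite map_mxM conjcM => ->.
by apply/matrixP => i j; rewrite !mxE rmorphM.
Qed.

Lemma hform_lyapunov M K v z :
  v *m map_mx (real_complex R) M = z *: v ->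
  hform (M *m K + K *m M^T) v = (z + z^*%C) * hform K v.
Proof.
move=> vM; have vcM := eigenvector_conjc vM.
rewrite /hform map_mxD !map_mxM mulmxDr mulmxDl !mulmxA vM -!mulmxA.
rewrite -!map_trmx -trmx_mul vcM.
by rewrite linearZ /= -scalemxAl -!scalemxAr -scalerDl mxE.
Qed.

Lemma negdef_Re_hform_lt0 K v : negdef K -> v != 0 -> complex.Re (hform K v) < 0.
Proof.
move=> /negdef_posdefN /posdef_Re_hform_gt0 Kpos /Kpos.
by rewrite /hform map_mxN mulmxN mulNmx mxE raddfN oppr_gt0.
Qed.

Lemma Re_realM (a : R) z : complex.Re ((a%:C)%C * z) = a * complex.Re z.
Proof. by case: z => x y /=; rewrite mul0r subr0. Qed.

Lemma lyapunov_hurwitz M P : posdef P -> negdef (M *m P + P *m M^T) -> hurwitz M.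
Proof.
move=> Ppos Nneg z.
rewrite [map_poly _ _](map_char_poly (real_complex R)) -eigenvalue_root_char.
case/eigenvalueP => v vM v0.
have := negdef_Re_hform_lt0 Nneg v0.
rewrite (hform_lyapunov _ vM) addcJ -rmorphMn -rmorphM Re_realM.
by rewrite pmulr_llt0 ?posdef_Re_hform_gt0 // pmulr_rlt0.
Qed.

End QuadraticForms.

Lemma negdef_congr (R : realType) (m k : nat) (L : 'M[R]_m) (V : 'M[R]_(m, k)) :
  negdef L -> (forall x : 'cV[R]_k, x != 0 -> V *m x != 0) -> negdef (V^T *m L *m V).
Proof.
case=> LT Lneg Vinj; split; first by rewrite !trmx_mul trmxK LT mulmxA.
by move=> x /Vinj /Lneg; rewrite trmx_mul !mulmxA.
Qed.

Lemma lmi_congr_closed_loop (R : realType) (n ne : nat) (A Q : 'M[R]_n)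
    (S : 'M[R]_(n, ne)) (Th : 'M[R]_(ne, n)) (gam : R) :
  Q^T = Q ->
  (col_mx 1%:M Q)^T *m block_mx (A *m Q + Q *m A^T) (S *m Th + gam *: Q)
                                (S *m Th + gam *: Q)^T (- (2 * gam) *: 1%:M)
    *m col_mx 1%:M Q
  = (A + S *m Th) *m Q + Q *m (A + S *m Th)^T.
Proof.
move=> QT; rewrite tr_col_mx trmx1 QT mul_row_block mul_row_col !mul1mx.
rewrite !linearD /= !linearZ /= !trmx_mul QT !(mulmxDl, mulmxDr) -!mulmxA.
rewrite !mulmx1 -!scalemxAl.
by apply/matrixP => i j; rewrite !mxE; ring.
Qed.

Lemma lmi_negdef_closed_loop (R : realType) (n ne : nat) (A Q : 'M[R]_n)
    (S : 'M[R]_(n, ne)) (Th : 'M[R]_(ne, n)) (gam : R) :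
  Q^T = Q ->
  negdef (block_mx (A *m Q + Q *m A^T) (S *m Th + gam *: Q)
                   (S *m Th + gam *: Q)^T (- (2 * gam) *: 1%:M)) ->
  negdef ((A + S *m Th) *m Q + Q *m (A + S *m Th)^T).
Proof.
move=> QT /(negdef_congr (V := col_mx 1%:M Q)); rewrite lmi_congr_closed_loop //.
by apply=> x x0; rewrite mul_col_mx mul1mx col_mx_eq0 negb_and x0.
Qed.

Lemma Tmat_mul_dvec (R : realType) (n l ne : nat) (Th : 'M[R]_(ne, n))
    (Bl : 'M[R]_(ne, l)) (x : 'cV[R]_n) (u : 'cV[R]_l) (e : 'cV[R]_ne) :
  Tmat Th Bl *m dvec x u e = Th *m x + Bl *m u - e.
Proof. by rewrite /Tmat /dvec !mul_row_col mulNmx mul1mx. Qed.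

Lemma mxtrace_Tmat_Dmat (R : realType) (n l ne N : nat)
    (xh : 'I_N -> 'cV[R]_n) (u : 'I_N -> 'cV[R]_l) (eh : 'I_N -> 'cV[R]_ne)
    (Th : 'M[R]_(ne, n)) (Bl : 'M[R]_(ne, l)) :
  \tr (Tmat Th Bl *m Dmat xh u eh *m (Tmat Th Bl)^T) =
  \sum_(i < N) (((Th *m xh i + Bl *m u i - eh i)^T
                   *m (Th *m xh i + Bl *m u i - eh i)) 0 0).
Proof.
rewrite /Dmat mulmx_sumr mulmx_suml raddf_sum; apply: eq_bigr => i _.
by rewrite !mulmxA -mulmxA -trmx_mul Tmat_mul_dvec -trace_mx11 mxtrace_mulC.
Qed.

Theorem theorem2 (R : realType) (n l ne N : nat)
  (A : 'M[R]_n) (Bu : 'M[R]_(n, l)) (S : 'M[R]_(n, ne)) (gam : R)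
  (xh : 'I_N -> 'cV[R]_n) (u : 'I_N -> 'cV[R]_l) (eh : 'I_N -> 'cV[R]_ne)
  (Q : 'M[R]_n) (Th : 'M[R]_(ne, n)) (Bl : 'M[R]_(ne, l)) (W : 'M[R]_ne) :
  hurwitz A -> 0 < gam ->
  optimizer A S gam (Dmat xh u eh) Q Th Bl W ->
  [/\ negdef ((A + S *m Th) *m Q + Q *m (A + S *m Th)^T),
      hurwitz (A + S *m Th)
    & \sum_(i < N) (((Th *m xh i + Bl *m u i - eh i)^T
                     *m (Th *m xh i + Bl *m u i - eh i)) 0 0) <= \tr W].
Proof.
move=> _ _ [[QT _ lmi cost Qpos] _].
have closed_loop := lmi_negdef_closed_loop QT lmi.
split=> //; first exact: lyapunov_hurwitz Qpos closed_loop.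
by rewrite -mxtrace_Tmat_Dmat.
Qed.
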